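(* For every $\alpha\in(0,1)$ there is a constant $D\ge 1$ with the following property. Let $Z$ be a bounded metric space and let $\mathcal C$ be a countable collection of closed subsets of $Z$, each of positive diameter, such that $\Delta(C_1,C_2)\ge D$ for all $C_1,C_2\in\mathcal C$ with $C_1\neq C_2$. Then for every pair of distinct points $z_1,z_2\in Z$, either $\{z_1,z_2\}\subseteq C$ for some $C\in\mathcal C$, or there is a function $u\in C^\alpha(Z)$ such that: (1) the restriction $u|_C$ is constant for every $C\in\mathcal C$; (2) if $C_1,C_2\in\mathcal C$ and $u(C_1)=u(C_2)$, then $C_1=C_2$; (3) $u(z_1)\neq u(z_2)$.
   Context: For nonempty subsets $C_1,C_2$ of positive diameter of a metric space, the relative distance is $\Delta(C_1,C_2)=\dfrac{\mathrm{dist}(C_1,C_2)}{\min(\mathrm{diam}\,C_1,\mathrm{diam}\,C_2)}$. $C^\alpha(Z)$ denotes the space of real-valued $\alpha$-Hölder continuous functions on $Z$, i.e. $u:Z\to\mathbb R$ with $|u(x)-u(y)|\le K\,d(x,y)^\alpha$ for some $K$ and all $x,y$. *)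

From HB Require Import structures.
From mathcomp Require Import all_boot all_order all_algebra.
From mathcomp Require Import all_classical all_reals all_analysis.
Set Implicit Arguments. Unset Strict Implicit. Unset Printing Implicit Defensive.
Import Order.TTheory GRing.Theory Num.Theory.
Local Open Scope classical_set_scope.
Local Open Scope ring_scope.

Section MetricDefs.
Variables (R : realType) (Z : Type) (d : Z -> Z -> R).

Definition is_metric : Prop :=
  (forall x y, 0 <= d x y) /\
  (forall x y, d x y = 0 <-> x = y) /\
  (forall x y, d x y = d y x) /\
  (forall x y z, d x z <= d x y + d y z).

Definition bounded_metric : Prop := exists M : R, forall x y, d x y <= M.

Definition mclosed (C : set Z) : Prop :=
  forall x, (forall e : R, 0 < e -> exists y, C y /\ d x y < e) -> C x.

Definition diam (C : set Z) : R :=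
  sup [set r | exists x y, C x /\ C y /\ r = d x y].

Definition setdist (C1 C2 : set Z) : R :=
  inf [set r | exists x y, C1 x /\ C2 y /\ r = d x y].

Definition reldist (C1 C2 : set Z) : R :=
  setdist C1 C2 / Num.min (diam C1) (diam C2).

Definition holder (alpha : R) (u : Z -> R) : Prop :=
  exists K : R, forall x y, `|u x - u y| <= K * (d x y) `^ alpha.
End MetricDefs.

From HB Require Import structures.
From mathcomp Require Import all_boot all_order all_algebra.
From mathcomp Require Import all_classical all_reals all_analysis.
From mathcomp Require Import ring lra zify.
Set Implicit Arguments. Unset Strict Implicit. Unset Printing Implicit Defensive.
Import Order.TTheory GRing.Theory Num.Theory.
Local Open Scope classical_set_scope.
Local Open Scope ring_scope.

(* Collapse every member of the family: the chain distance rho(x, y) is the infimum,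
   over chains of hops through members of the family, of the sum of the alpha-powers
   of the gaps between consecutive hops.  Each rho(p, .) is alpha-Hoelder and constant
   on every member.  Cutting a chain at the first entrance into and last exit from its
   largest member, the separation Delta >= D = 1/(1 - alpha) makes the detour through
   that member cost more than it saves, because alpha (1 + 1/D) <= 1 and t |-> t^alpha
   is concave; hence rho(x, y) > 0 unless x and y lie in a common member.  Enumerating
   z1, z2 and a point of each member as p_0, p_1, ..., the function
   u = sum_n w_n rho(p_n, .) separates every such pair p_k, p_l when the positive
   weights w_n are chosen inductively, each step avoiding finitely many bad values. *)

(** * Concavity of powers *)

Lemma ge0_ler_powRl (R : realType) (a x y : R) :
  0 <= a -> 0 <= x -> x <= y -> x `^ a <= y `^ a.
Proof.
by move=> a0 x0 xy; apply: ge0_ler_powR; rewrite ?nnegrE // (le_trans x0).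
Qed.

Section ConcavePower.
Variables (R : realType) (a : R).
Hypothesis a01 : 0 < a < 1.

(* Young's inequality with the conjugate exponents 1/a and 1/(1-a). *)
Lemma powR_Bernoulli (s : R) : 0 <= s -> (1 + s) `^ a <= 1 + a * s.
Proof.
case/andP: a01 => a0 a1 s0.
have := @conjugate_powR R ((1 + s) `^ a) 1 a^-1 (1 - a)^-1 (powR_ge0 _ _) ler01.
rewrite !invr_gt0 subr_gt0 a0 a1 !invrK addrC subrK => /(_ isT isT erefl).
rewrite -powRrM divff ?gt_eqF // powRr1 ?addr_ge0 // powR1 mulr1 mulrDl mul1r.
by move=> h; apply: le_trans h _; lra.
Qed.

Lemma powRD_le_scaled (x y c : R) : 0 <= y -> y <= x -> 0 <= c -> a * c <= 1 ->
  (x + c * y) `^ a <= x `^ a + y `^ a.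
Proof.
move=> y0 yx c0 ac1; case/andP: a01 => a0 a1.
have x0 : 0 <= x := le_trans y0 yx.
have [x_eq0|x_neq0] := eqVneq x 0.
  have y_eq0 : y = 0 by apply/le_anti; rewrite y0 -x_eq0 yx.
  by rewrite x_eq0 y_eq0 mulr0 addr0 powR0 ?gt_eqF // addr0.
have x_gt0 : 0 < x by rewrite lt_neqAle eq_sym x_neq0.
have [t [t0 t1 ->]] : exists t, [/\ 0 <= t, t <= 1 & y = x * t].
  exists (y / x); split; first exact: divr_ge0.
    by rewrite ler_pdivrMr ?mul1r.
  by rewrite mulrC divfK ?gt_eqF.
rewrite mulrCA -{1}[x]mulr1 -mulrDr !powRM ?addr_ge0 ?mulr_ge0 // -{2}[x `^ a]mulr1.
rewrite -mulrDr ler_pM2l ?powR_gt0 //.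
apply: le_trans (powR_Bernoulli (mulr_ge0 c0 t0)) _.
have ct : a * (c * t) <= t by rewrite mulrA ler_piMl // mulr_ge0 // ltW.
apply: le_trans (_ : 1 + t <= _); first by rewrite lerD2l.
have [->|t_neq0] := eqVneq t 0; first by rewrite powR0 ?gt_eqF.
have t_gt0 : 0 < t by rewrite lt_neqAle eq_sym t_neq0.
by rewrite lerD2l ger1_powR ?t_gt0 ?t1 // ltW.
Qed.

Lemma powRD_le (x y : R) : 0 <= x -> 0 <= y -> (x + y) `^ a <= x `^ a + y `^ a.
Proof.
have a1 : a * 1 <= 1 by rewrite mulr1 ltW // (andP a01).2.
move=> x0 y0; case: (leP y x) => yx.
  by have := powRD_le_scaled y0 yx ler01 a1; rewrite mul1r.
by have := powRD_le_scaled x0 (ltW yx) ler01 a1; rewrite mul1r addrC [_ `^ a + _]addrC.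
Qed.

End ConcavePower.

Section GapInequalities.
Variables (R : realType) (a D : R).
Hypotheses (a01 : 0 < a < 1) (D_gt0 : 0 < D).

Lemma powR_gap_le (x y e : R) : a * (1 + D^-1) <= 1 -> 0 <= x -> 0 <= y -> 0 <= e ->
  D * e <= x -> D * e <= y -> (x + y + e) `^ a <= x `^ a + y `^ a.
Proof.
move=> aD x0 y0 e0.
wlog yx : x y x0 y0 / y <= x.
  move=> hwlog xe ye; case: (leP y x) => [yx|/ltW xy]; first exact: hwlog.
  by rewrite [x + y]addrC [x `^ a + _]addrC; apply: hwlog.
move=> _ ye.
have c0 : 0 <= 1 + D^-1 by rewrite addr_ge0 ?invr_ge0 ?ltW.
apply: le_trans (powRD_le_scaled a01 y0 yx c0 aD).
apply: ge0_ler_powRl; [exact: ltW (andP a01).1|by rewrite !addr_ge0|].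
by rewrite mulrDl mul1r -addrA lerD2l lerD2l ler_pdivlMl.
Qed.

Lemma powR_gap_le_div (x y e : R) : 0 <= x -> 0 <= y -> 0 <= e -> D * e <= y ->
  ((x + y + e) / (1 + D^-1)) `^ a <= (x / (1 + D^-1)) `^ a + y `^ a.
Proof.
move=> x0 y0 e0 ye; have l0 : 0 < 1 + D^-1 by rewrite ltr_wpDr ?invr_ge0 ?ltW.
apply: le_trans (powRD_le a01 (divr_ge0 x0 (ltW l0)) y0).
apply: ge0_ler_powRl; first exact: ltW (andP a01).1.
  exact: divr_ge0 (addr_ge0 (addr_ge0 x0 y0) e0) (ltW l0).
rewrite ler_pdivrMr // mulrDl divfK ?gt_eqF // -addrA lerD2l mulrDr mulr1.
by rewrite lerD2l mulrC ler_pdivlMl.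
Qed.

End GapInequalities.

Section ListFacts.
Variable T : Type.

Lemma In_cat (x : T) s1 s2 : List.In x (s1 ++ s2) <-> List.In x s1 \/ List.In x s2.
Proof. by elim: s1 => [|y s1 IH] /=; [tauto|rewrite IH; tauto]. Qed.

Lemma In_rev (x : T) s : List.In x (rev s) <-> List.In x s.
Proof. by elim: s => //= y s IH; rewrite rev_cons -cats1 In_cat IH /=; tauto. Qed.

Lemma split_first (P : T -> Prop) s : (exists2 x, List.In x s & P x) ->
  exists s1 x s2, [/\ s = s1 ++ x :: s2, P x & forall y, List.In y s1 -> ~ P y].
Proof.
elim: s => [[x []]|y s IH [x xs Px]].
have [Py|nPy] := pselect (P y); first by exists [::], y, s.
case: xs => [eyx|xs]; first by subst.
have [s1 [z [s2 [-> Pz h]]]] := IH (ex_intro2 _ _ x xs Px).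
by exists (y :: s1), z, s2; split => // w /= [<-|]; [exact: nPy|exact: h].
Qed.

Lemma split_last (P : T -> Prop) s : (exists2 x, List.In x s & P x) ->
  exists s1 x s2, [/\ s = s1 ++ x :: s2, P x & forall y, List.In y s2 -> ~ P y].
Proof.
move=> [x xs Px]; have [|s1 [y [s2 [e Py h]]]] := @split_first P (rev s).
  by exists x; rewrite ?In_rev.
exists (rev s2), y, (rev s1); split => //; last by move=> z /In_rev /h.
by rewrite -[s]revK e rev_cat rev_cons cat_rcons.
Qed.

End ListFacts.

Lemma In_argmax (R : realDomainType) (T : Type) (f : T -> R) s : s <> [::] ->
  exists2 x, List.In x s & forall y, List.In y s -> f y <= f x.
Proof.
elim: s => [//|x [|y s] IH _]; first by exists x => [|z [<-|[]]]; [left|].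
have [z zs hz] := IH ltac:(by []).
case: (leP (f x) (f z)) => xz.
  by exists z => [|w [<-|ws]]; [right|exact: xz|exact: hz].
by exists x => [|w [<-|ws]]; [left| |exact: le_trans (hz w ws) (ltW xz)].
Qed.

Section MetricFacts.
Variables (R : realType) (Z : Type) (d : Z -> Z -> R).
Hypothesis hd : is_metric d.

Lemma metric_ge0 x y : 0 <= d x y. Proof. by case: hd. Qed.
Lemma metric_eq0 x y : d x y = 0 -> x = y. Proof. by case: hd => _ [/(_ x y) []]. Qed.
Lemma metric_xx x : d x x = 0. Proof. by case: hd => _ [/(_ x x) [_ ->]]. Qed.
Lemma metric_sym x y : d x y = d y x. Proof. by case: hd => _ [_ []]. Qed.
Lemma metric_triangle x y z : d x z <= d x y + d y z. Proof. by case: hd => _ [_ [_]]. Qed.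

Lemma setdist_le C1 C2 x y : C1 x -> C2 y -> setdist d C1 C2 <= d x y.
Proof.
move=> C1x C2y; apply: ge_inf; last by exists x, y.
by exists 0 => _ [p [q [_ [_ ->]]]]; exact: metric_ge0.
Qed.

Lemma diam_ge (C : set Z) x y : bounded_metric d -> C x -> C y -> d x y <= diam d C.
Proof.
move=> [M hM] Cx Cy; apply: ub_le_sup; last by exists x, y.
by exists M => _ [p [q [_ [_ ->]]]].
Qed.

Lemma dist_through (C : set Z) x y p q : bounded_metric d -> C p -> C q ->
  d x y <= d x p + d q y + diam d C.
Proof.
move=> hbd Cp Cq; have := diam_ge hbd Cp Cq.
have := metric_triangle x p y; have := metric_triangle p q y; lra.
Qed.

Lemma mclosed_dist_gt0 (C : set Z) x : mclosed d C -> ~ C x ->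
  exists2 e, 0 < e & forall y, C y -> e <= d x y.
Proof.
move=> Ccl nCx; apply: contrapT => nex; apply/nCx/Ccl => e e0.
apply: contrapT => nnear; apply: nex; exists e => // y Cy.
by rewrite leNgt; apply/negP => dxy; apply: nnear; exists y.
Qed.

End MetricFacts.

Lemma diam_gt0_nonempty (R : realType) (Z : Type) (d : Z -> Z -> R) (C : set Z) :
  0 < diam d C -> C !=set0.
Proof.
move=> dC; apply/set0P/negP => /eqP C0; move: dC; rewrite /diam.
suff -> : [set r | exists x y, C x /\ C y /\ r = d x y] = set0 by rewrite sup0 ltxx.
by apply/seteqP; split => // r [x [_ [Cx _]]]; rewrite C0 in Cx.
Qed.

(** * A series separating prescribed pairs of points *)

Lemma finite_min_pos (R : realDomainType) n (Q : nat -> Prop) (g : nat -> R) :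
  (forall k, (k < n)%N -> Q k -> 0 < g k) ->
  exists2 e, 0 < e & forall k, (k < n)%N -> Q k -> e <= g k.
Proof.
elim: n => [|n IH] g_gt0; first by exists 1.
have [e e0 he] := IH (fun k kn => g_gt0 k (leqW kn)).
have lt_n k : (k < n.+1)%N -> k != n -> (k < n)%N by rewrite ltnS ltn_neqAle andbC => ->.
have [Qn|nQn] := pselect (Q n).
  exists (Num.min e (g n)) => [|k kn Qk]; first by rewrite lt_min e0 g_gt0.
  have [->|nk] := eqVneq k n; first by rewrite ge_min lexx orbT.
  by rewrite ge_min he ?lt_n.
exists e => // k kn Qk; have [ekn|nk] := eqVneq k n; first by rewrite ekn in Qk.
exact/he/Qk/lt_n.
Qed.

Section SeparatingSeries.
Variables (R : realType) (T : Type) (F : nat -> T -> R) (B : R) (P : nat -> T).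
Hypotheses (B_gt0 : 0 < B) (F_ge0 : forall n z, 0 <= F n z) (F_le : forall n z, F n z <= B).

Lemma F_dist_le n a b : `|F n a - F n b| <= B.
Proof.
have := F_ge0 n a; have := F_ge0 n b; have := F_le n a; have := F_le n b.
by rewrite ler_norml => *; apply/andP; split; lra.
Qed.

Definition psum (w : nat -> R) n z : R := \sum_(j < n) w j * F j z.

Definition good_step n (w : nat -> R) (e v e' : R) : Prop :=
  [/\ 0 < v, 4 * B * v <= e, 0 < e', e' <= e / 2 & forall k, (k < n)%N ->
    F n (P k) != F n (P n) ->
    3 * e' <= `|psum w n (P k) - psum w n (P n) + v * (F n (P k) - F n (P n))|].

Definition next_step n (w : nat -> R) (e : R) : R * R :=
  if pselect (exists ve : R * R, good_step n w e ve.1 ve.2) is left h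
  then proj1_sig (cid h) else (0, 0).

Lemma next_stepP n w e : (exists v e', good_step n w e v e') ->
  good_step n w e (next_step n w e).1 (next_step n w e).2.
Proof.
move=> [v [e' h]]; rewrite /next_step; case: pselect => [h'|[]]; last by exists (v, e').
exact: (proj2_sig (cid h')).
Qed.

(* [state n] holds the weights w_0, ..., w_(n-1) chosen so far (later entries are
   junk) and the margin e_n by which the n-th partial sum separates earlier pairs. *)
Fixpoint state n : (nat -> R) * R :=
  if n is m.+1 then
    let s := state m in let ve := next_step m s.1 s.2 in
    (fun j => if j == m then ve.1 else s.1 j, ve.2)
  else (fun=> 0, 1).

Definition weight j := (state j.+1).1 j.
Definition margin n := (state n).2.
Definition partial_sum n z := psum weight n z.
Definition weight_sum n := \sum_(j < n) weight j.

Lemma state_weight n j : (j < n)%N -> (state n).1 j = weight j.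
Proof.
elim: n => [//|n IH] jn /=; have [->|nj] := eqVneq j n; first by rewrite /weight /= eqxx.
by apply: IH; rewrite ltn_neqAle nj -ltnS.
Qed.

Lemma psum_state n z : psum (state n).1 n z = partial_sum n z.
Proof. by apply: eq_bigr => j _; rewrite state_weight. Qed.

Lemma partial_sumS n z : partial_sum n.+1 z = partial_sum n z + weight n * F n z.
Proof. by rewrite /partial_sum /psum big_ord_recr. Qed.

Lemma weight_sumS n : weight_sum n.+1 = weight_sum n + weight n.
Proof. by rewrite /weight_sum big_ord_recr. Qed.

Definition separates n := 0 < margin n /\ forall k l, (k < l)%N -> (l < n)%N ->
  F l (P k) != F l (P l) -> 2 * margin n <= `|partial_sum n (P k) - partial_sum n (P l)|.

(* Each earlier pair (k, n) rules out only the single weight v = b k. *)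
Lemma good_step_exists n : separates n ->
  exists v e', good_step n (state n).1 (margin n) v e'.
Proof.
move=> [e_gt0 _]; set e := margin n in e_gt0 *.
pose c k := partial_sum n (P k) - partial_sum n (P n).
pose r k := F n (P k) - F n (P n).
pose b k := - c k / r k.
have [e0 e0_gt0 he0] := @finite_min_pos _ n
  (fun k => F n (P k) != F n (P n) /\ 0 < b k) b (fun k _ h => h.2).
pose v := Num.min (e / (4 * B)) e0 / 2.
have m_le1 : Num.min (e / (4 * B)) e0 <= e / (4 * B) by rewrite ge_min lexx.
have m_le2 : Num.min (e / (4 * B)) e0 <= e0 by rewrite ge_min lexx orbT.
have v_gt0 : 0 < v by rewrite divr_gt0 // lt_min e0_gt0 divr_gt0 // mulr_gt0.
have v_le : 4 * B * v <= e.
  have h1 : 4 * B * (e / (4 * B)) = e by rewrite mulrC divfK // gt_eqF // mulr_gt0.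
  have h2 : 4 * B * Num.min (e / (4 * B)) e0 <= 4 * B * (e / (4 * B)).
    by rewrite ler_pM2l ?mulr_gt0.
  by rewrite /v mulrA; lra.
have v_good k : (k < n)%N -> F n (P k) != F n (P n) -> c k + v * r k != 0.
  move=> kn rk0; apply/eqP => ckv.
  have vb : v = b k.
    by rewrite /b -[c k](addrK (v * r k)) ckv add0r opprK mulfK // subr_eq0.
  have bk_gt0 : 0 < b k by rewrite -vb.
  have := he0 k kn (conj rk0 bk_gt0); rewrite -vb.
  by move: m_le2 e0_gt0; rewrite /v; lra.
have [e1 e1_gt0 he1] := @finite_min_pos _ n (fun k => F n (P k) != F n (P n))
  (fun k => `|c k + v * r k|) (fun k kn rk0 => ltac:(by rewrite normr_gt0 v_good)).
exists v, (Num.min (e / 2) (e1 / 3)); split => //.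
- by rewrite lt_min !divr_gt0.
- by rewrite ge_min lexx.
move=> k kn rk0; rewrite !psum_state.
have : Num.min (e / 2) (e1 / 3) <= e1 / 3 by rewrite ge_min lexx orbT.
by have := he1 k kn rk0; rewrite /c /r /=; lra.
Qed.

Lemma good_step_state n : separates n ->
  good_step n (state n).1 (margin n) (weight n) (margin n.+1).
Proof.
by move=> h; rewrite /weight {2}/margin /= eqxx; exact/next_stepP/good_step_exists.
Qed.

Lemma separates_all n : separates n.
Proof.
elim: n => [|n IH]; first by split => [|k l _]; [exact: ltr01|rewrite ltn0].
have [w_gt0 w_le e'_gt0 e'_le new] := good_step_state IH; have [_ old] := IH.
have regroup (a b s t : R) :
  a + weight n * s - (b + weight n * t) = a - b + weight n * (s - t) by ring.
split => // k l kl; rewrite ltnS leq_eqVlt => /orP[/eqP el|ln] hkl.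
  rewrite el in kl hkl *; have := new k kl hkl.
  by rewrite !psum_state !partial_sumS regroup; lra.
have Fkl : `|weight n * (F n (P k) - F n (P l))| <= weight n * B.
  by rewrite normrM gtr0_norm // ler_pM2l // F_dist_le.
have := lerB_normD (partial_sum n (P k) - partial_sum n (P l))
  (weight n * (F n (P k) - F n (P l))).
rewrite !partial_sumS regroup; have := old k l kl ln hkl.
by move: w_le Fkl; rewrite -mulrA [B * _]mulrC; lra.
Qed.

Lemma weight_gt0 n : 0 < weight n.
Proof. by case: (good_step_state (separates_all n)). Qed.

Lemma margin_gt0 n : 0 < margin n.
Proof. by case: (separates_all n). Qed.

Lemma weight_tail N k :
  B * (weight_sum (N + k) - weight_sum N) + margin (N + k) / 2 <= margin N / 2.
Proof.
elim: k => [|k IH]; first by rewrite addn0 subrr mulr0 add0r.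
have [_ w_le _ e'_le _] := good_step_state (separates_all (N + k)).
by rewrite addnS weight_sumS; move: w_le; rewrite -mulrA; lra.
Qed.

Lemma weight_sum_le n : weight_sum n <= (2 * B)^-1.
Proof.
have := weight_tail 0 n; rewrite add0n [weight_sum 0]big_ord0 subr0 [margin 0]/margin /=.
move=> tail; have m0 := margin_gt0 n.
by rewrite -[X in _ <= X]div1r ler_pdivlMr ?mulr_gt0 //; lra.
Qed.

Lemma partial_sum_tail N k z : 0 <= partial_sum (N + k) z - partial_sum N z <=
  B * (weight_sum (N + k) - weight_sum N).
Proof.
elim: k => [|k IH]; first by rewrite addn0 !subrr mulr0 lexx.
have w0 := weight_gt0 (N + k).
have t0 : 0 <= weight (N + k) * F (N + k) z := mulr_ge0 (ltW w0) (F_ge0 _ _).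
have tB : weight (N + k) * F (N + k) z <= B * weight (N + k).
  by rewrite mulrC ler_pM2r // F_le.
by rewrite addnS partial_sumS weight_sumS; move: IH tB; rewrite mulrDr; lra.
Qed.

Lemma partial_sum_between N m z : (N <= m)%N ->
  partial_sum N z <= partial_sum m z <= partial_sum N z + margin N / 2.
Proof.
move=> /subnKC <-; have := partial_sum_tail N (m - N) z.
by have := weight_tail N (m - N); have := margin_gt0 (N + (m - N)); lra.
Qed.

Lemma partial_sum_holder x y c n : 0 <= c -> (forall n, F n x <= F n y + c) ->
  partial_sum n x <= partial_sum n y + weight_sum n * c.
Proof.
move=> c0 hF; elim: n => [|n IH].
  by rewrite /partial_sum /psum /weight_sum !big_ord0 mul0r addr0.
rewrite !partial_sumS weight_sumS mulrDl.
have : weight n * F n x <= weight n * F n y + weight n * c.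
  by rewrite -mulrDr ler_wpM2l ?hF // ltW ?weight_gt0.
lra.
Qed.

Definition series z := sup (range (partial_sum ^~ z)).

Lemma series_between N z :
  partial_sum N z <= series z <= partial_sum N z + margin N / 2.
Proof.
have ub : has_ubound (range (partial_sum ^~ z)).
  exists (partial_sum 0 z + margin 0 / 2) => _ [m _ <-].
  by case/andP: (partial_sum_between z (leq0n m)).
apply/andP; split; first by apply: (ub_le_sup ub); exists N.
apply: ge_sup; first by exists (partial_sum 0 z), 0%N.
move=> _ [m _ <-]; have e0 := margin_gt0 N.
case: (leqP m N) => [mN|/ltnW Nm]; last by case/andP: (partial_sum_between z Nm).
by case/andP: (partial_sum_between z mN) => mN' _; lra.
Qed.

Lemma series_holder x y c : 0 <= c -> (forall n, F n x <= F n y + c) ->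
  series x <= series y + (2 * B)^-1 * c.
Proof.
move=> c0 hF; apply: ge_sup; first by exists (partial_sum 0 x), 0%N.
move=> _ [n _ <-]; apply: le_trans (partial_sum_holder n c0 hF) _.
apply: lerD; first by case/andP: (series_between n y).
by rewrite ler_wpM2r ?weight_sum_le.
Qed.

Lemma series_eq x y : (forall n, F n x = F n y) -> series x = series y.
Proof.
move=> hF; rewrite /series (_ : partial_sum ^~ x = partial_sum ^~ y) //.
by apply: funext => n; apply: eq_bigr => j _; rewrite hF.
Qed.

Lemma series_sep k l : (k < l)%N -> F l (P k) != F l (P l) ->
  series (P k) != series (P l).
Proof.
move=> kl hkl; have [e0 sep] := separates_all l.+1.
have := sep k l kl (ltnSn l) hkl; rewrite ler_normr.
case/andP: (series_between l.+1 (P k)); case/andP: (series_between l.+1 (P l)).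
by move=> *; apply/eqP => e; move: e0; lra.
Qed.

End SeparatingSeries.

(** * Chains through a separated family *)

Section SeparatedFamily.
Variables (R : realType) (al D : R) (Z : Type) (d : Z -> Z -> R) (Cc : set (set Z)).
Hypotheses (al01 : 0 < al < 1) (D_gt0 : 0 < D) (alD : al * (1 + D^-1) <= 1).
Hypotheses (hd : is_metric d) (hbd : bounded_metric d).
Hypothesis Cc_closed : forall C, Cc C -> mclosed d C.
Hypothesis Cc_diam : forall C, Cc C -> 0 < diam d C.
Hypothesis Cc_sep : forall C1 C2, Cc C1 -> Cc C2 -> C1 <> C2 -> D <= reldist d C1 C2.

Definition apart x y := x <> y /\ ~ (exists C, [/\ Cc C, C x & C y]).

Lemma sep_dist C1 C2 p q : Cc C1 -> Cc C2 -> C1 <> C2 -> C1 p -> C2 q ->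
  D * Num.min (diam d C1) (diam d C2) <= d p q.
Proof.
move=> c1 c2 ne C1p C2q; apply: le_trans (setdist_le hd C1p C2q).
by rewrite -ler_pdivlMr ?lt_min ?Cc_diam //; exact: Cc_sep.
Qed.

Lemma sep_dist_smaller C A p q : Cc C -> Cc A -> C <> A -> diam d C <= diam d A ->
  C p -> A q -> D * diam d C <= d p q.
Proof. by move=> cC cA ne le Cp Aq; have := sep_dist cC cA ne Cp Aq; rewrite min_l. Qed.

Lemma sep_disjoint C1 C2 z : Cc C1 -> Cc C2 -> C1 z -> C2 z -> C1 = C2.
Proof.
move=> c1 c2 C1z C2z; apply: contrapT => ne.
have m0 : 0 < D * Num.min (diam d C1) (diam d C2) by rewrite mulr_gt0 ?lt_min ?Cc_diam.
by have := sep_dist c1 c2 ne C1z C2z; rewrite (metric_xx hd) leNgt m0.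
Qed.

(* If a set of diameter >= r not containing x comes within D r / 2 of x, then every
   other such set stays D r / 2 away from x, and that one set is away by closedness. *)
Lemma large_sets_away x r : 0 < r -> exists2 th, 0 < th &
  forall C c, Cc C -> r <= diam d C -> ~ C x -> C c -> th <= d x c.
Proof.
move=> r0; have Dr0 : 0 < D * r / 2 by rewrite divr_gt0 ?mulr_gt0.
have [[C0 [c0 [cC0 rC0 nC0x C0c0 near]]]|far] :=
  pselect (exists C0 c0, [/\ Cc C0, r <= diam d C0, ~ C0 x, C0 c0 & d x c0 < D * r / 2]).
  have [e0 e0_gt0 he0] := mclosed_dist_gt0 (Cc_closed cC0) nC0x.
  exists (Num.min e0 (D * r / 2)) => [|C c cC rC nCx Cc']; first by rewrite lt_min e0_gt0.
  have [eC|neC] := pselect (C = C0); first by rewrite ge_min he0 // -eC.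
  have hC := sep_dist cC cC0 neC Cc' C0c0.
  have hm : D * r <= D * Num.min (diam d C) (diam d C0) by rewrite ler_pM2l // le_min rC.
  have := metric_triangle hd c x c0; rewrite (metric_sym hd c x) => tri.
  by rewrite ge_min; apply/orP; right; move: near hm; set Dr := D * r; lra.
exists (D * r / 2) => // C c cC rC nCx Cc'.
by rewrite leNgt; apply/negP => near; apply: far; exists C, c.
Qed.

(* A hop (C, p, q) enters C at p and leaves it at q; moving inside C is free, so a
   chain of hops from x to y costs the sum of the snowflaked gaps between them. *)
Definition hop := (set Z * Z * Z)%type.
Definition hop_set (h : hop) : set Z := h.1.1.
Definition hop_in (h : hop) : Z := h.1.2.
Definition hop_out (h : hop) : Z := h.2.
Definition hop_flip (h : hop) : hop := (hop_set h, hop_out h, hop_in h).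
Definition flip_chain (hs : seq hop) : seq hop := rev (map hop_flip hs).

Fixpoint chain_cost (x : Z) (hs : seq hop) (y : Z) : R :=
  if hs is h :: hs' then d x (hop_in h) `^ al + chain_cost (hop_out h) hs' y
  else d x y `^ al.

Definition hop_wf (h : hop) : Prop :=
  [/\ Cc (hop_set h), hop_set h (hop_in h) & hop_set h (hop_out h)].
Definition chain_wf (hs : seq hop) : Prop := forall h, List.In h hs -> hop_wf h.
Definition hops_below (A : set Z) (hs : seq hop) : Prop := forall h, List.In h hs ->
  [/\ hop_wf h, hop_set h <> A & diam d (hop_set h) <= diam d A].

Lemma chain_cost_ge0 x hs y : 0 <= chain_cost x hs y.
Proof. by elim: hs x => [|h hs IH] x /=; rewrite ?addr_ge0 ?powR_ge0. Qed.

Lemma chain_cost_cat x hs1 h hs2 y : chain_cost x (hs1 ++ h :: hs2) y =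
  chain_cost x hs1 (hop_in h) + chain_cost (hop_out h) hs2 y.
Proof. by elim: hs1 x => [|g hs1 IH] x //=; rewrite IH addrA. Qed.

Lemma chain_cost_flip x hs y : chain_cost x hs y = chain_cost y (flip_chain hs) x.
Proof.
elim: hs x => [|h hs IH] x /=; first by rewrite (metric_sym hd).
rewrite /flip_chain /= rev_cons -cats1 chain_cost_cat /= -/(flip_chain hs) -IH.
by rewrite (metric_sym hd (hop_in h)) addrC.
Qed.

Lemma hops_below_flip A hs : hops_below A hs -> hops_below A (flip_chain hs).
Proof.
move=> hb h /In_rev; elim: hs hb => //= g hs IH hb [<-|hhs]; last first.
  by apply: IH => // k ks; apply: hb; right.
by have [[? ? ?] ? ?] := hb g (or_introl erefl).
Qed.

Lemma hops_below_incl A hs1 hs2 :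
  List.incl hs1 hs2 -> hops_below A hs2 -> hops_below A hs1.
Proof. by move=> inc hb h /inc/hb. Qed.

Variant chain_cut x hs y : Prop :=
  ChainCut C p q hs1 hs2 of Cc C & C p & C q & (exists2 h, List.In h hs & hop_set h = C)
    & hops_below C hs1 & hops_below C hs2 & List.incl hs1 hs & List.incl hs2 hs
    & (size hs1 < size hs)%N & (size hs2 < size hs)%N
    & chain_cost x hs1 p + chain_cost q hs2 y <= chain_cost x hs y.

(* Cut the chain at the first entrance into and the last exit from a set C of maximal
   diameter among its hops; the parts before and after only use sets below C. *)
Lemma cut_at_largest x hs y : hs <> [::] -> chain_wf hs -> chain_cut x hs y.
Proof.
move=> hs0 wf; have [h0 h0s h0max] := In_argmax (fun h => diam d (hop_set h)) hs0.
set C := hop_set h0.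
have below_C s : List.incl s hs -> (forall g, List.In g s -> hop_set g <> C) ->
    hops_below C s.
  by move=> inc nC g gs; split; [exact/wf/inc|exact: nC|exact/h0max/inc].
have [hs1 [a [rest [E Ca first]]]] :=
  @split_first _ (fun h => hop_set h = C) hs (ex_intro2 _ _ h0 h0s erefl).
have inc1 : List.incl hs1 hs by rewrite E => g g1; apply/In_cat; left.
have inca : List.In a hs by rewrite E; apply/In_cat; right; left.
have incr : List.incl rest hs by rewrite E => g gr; apply/In_cat; right; right.
have [cC Cain Caout] := wf a inca; rewrite Ca in cC Cain Caout.
have [[b brest Cb]|nex] := pselect (exists2 g, List.In g rest & hop_set g = C).
  have [mid [b' [hs2 [E2 Cb' last]]]] :=
    @split_last _ (fun h => hop_set h = C) rest (ex_intro2 _ _ b brest Cb).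
  have incb : List.In b' hs by apply: incr; rewrite E2; apply/In_cat; right; left.
  have inc2 : List.incl hs2 hs.
    by move=> g g2; apply: incr; rewrite E2; apply/In_cat; right; right.
  have [_ _ Cbout] := wf b' incb; rewrite Cb' in Cbout.
  apply: (@ChainCut _ _ _ C (hop_in a) (hop_out b') hs1 hs2) => //.
  - by exists h0.
  - exact: below_C.
  - exact: below_C.
  - by rewrite E size_cat /=; lia.
  - by rewrite E size_cat /= E2 size_cat /=; lia.
  - by rewrite E E2 !chain_cost_cat lerD2l lerDr chain_cost_ge0.
apply: (@ChainCut _ _ _ C (hop_in a) (hop_out a) hs1 rest) => //.
- by exists h0.
- exact: below_C.
- by apply: below_C => // g gs eg; apply: nex; exists g.
- by rewrite E size_cat /=; lia.
- by rewrite E size_cat /=; lia.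
- by rewrite E chain_cost_cat.
Qed.

Local Notation lam := (1 + D^-1).

Lemma lam_gt0 : 0 < lam. Proof. by rewrite ltr_wpDr ?invr_ge0 ?ltW. Qed.

Lemma chain_cost_ge_between A B s t hs : Cc A -> Cc B -> A s -> B t ->
  hops_below A hs -> hops_below B hs -> d s t `^ al <= chain_cost s hs t.
Proof.
have [n] := ubnP (size hs); elim: n => // n IH in A B s t hs *; rewrite ltnS => hsn.
move=> cA cB As Bt bA bB; case: hs => [|h hs'] in hsn bA bB *; first exact: lexx.
have [|C p q hs1 hs2 cC Cp Cq [h0 h0s hC] bC1 bC2 inc1 inc2 sz1 sz2 cut] :=
  @cut_at_largest s (h :: hs') t ltac:(by []); first by move=> g /bA[].
have [_ neA leA] := bA h0 h0s; have [_ neB leB] := bB h0 h0s.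
rewrite hC in neA leA neB leB.
have H1 : d s p `^ al <= chain_cost s hs1 p.
  apply: (IH A C) => //; first exact: leq_trans sz1 hsn.
  exact: hops_below_incl inc1 bA.
have H2 : d q t `^ al <= chain_cost q hs2 t.
  apply: (IH C B) => //; first exact: leq_trans sz2 hsn.
  exact: hops_below_incl inc2 bB.
have hsp : D * diam d C <= d s p.
  by rewrite (metric_sym hd s p); exact: sep_dist_smaller cC cA neA leA Cp As.
have hqt : D * diam d C <= d q t by exact: sep_dist_smaller cC cB neB leB Cq Bt.
apply: le_trans cut; apply: le_trans (lerD H1 H2).
apply: le_trans (powR_gap_le al01 D_gt0 alD (metric_ge0 hd _ _) (metric_ge0 hd _ _)
  (ltW (Cc_diam cC)) hsp hqt).
apply: ge0_ler_powRl; first exact: ltW (andP al01).1.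
  exact: metric_ge0.
exact: dist_through.
Qed.

Lemma chain_cost_ge_into B x t hs : Cc B -> B t -> hops_below B hs ->
  (d x t / lam) `^ al <= chain_cost x hs t.
Proof.
have al0 : 0 <= al := ltW (andP al01).1.
have d_div_le y z : (d y z / lam) `^ al <= d y z `^ al.
  apply: ge0_ler_powRl; rewrite ?divr_ge0 ?(metric_ge0 hd) ?(ltW lam_gt0) //.
  by rewrite ler_pdivrMr ?lam_gt0 // ler_peMr ?(metric_ge0 hd) // lerDl invr_ge0 ltW.
have [n] := ubnP (size hs); elim: n => // n IH in x t hs B *; rewrite ltnS => hsn.
move=> cB Bt bB; case: hs => [|h hs'] in hsn bB *; first exact: d_div_le.
have [|C p q hs1 hs2 cC Cp Cq [h0 h0s hC] bC1 bC2 inc1 inc2 sz1 sz2 cut] :=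
  @cut_at_largest x (h :: hs') t ltac:(by []); first by move=> g /bB[].
have [_ neB leB] := bB h0 h0s; rewrite hC in neB leB.
have H1 : (d x p / lam) `^ al <= chain_cost x hs1 p.
  by apply: (IH _ _ _ C) => //; exact: leq_trans sz1 hsn.
have H2 : d q t `^ al <= chain_cost q hs2 t.
  apply: (chain_cost_ge_between cC cB) => //; exact: hops_below_incl inc2 bB.
have hqt : D * diam d C <= d q t by exact: sep_dist_smaller cC cB neB leB Cq Bt.
apply: le_trans cut; apply: le_trans (lerD H1 H2).
apply: le_trans (powR_gap_le_div al01 D_gt0 (metric_ge0 hd _ _) (metric_ge0 hd _ _)
  (ltW (Cc_diam cC)) hqt).
apply: ge0_ler_powRl; rewrite ?divr_ge0 ?(metric_ge0 hd) ?(ltW lam_gt0) //.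
by rewrite ler_pM2r ?invr_gt0 ?lam_gt0 ?dist_through.
Qed.

Lemma chain_cost_ge_from A s y hs : Cc A -> A s -> hops_below A hs ->
  (d s y / lam) `^ al <= chain_cost s hs y.
Proof.
move=> cA As bA; rewrite chain_cost_flip (metric_sym hd s y).
exact: chain_cost_ge_into cA As (hops_below_flip bA).
Qed.

(* Near x and y only chains through a set of diameter >= d x y / 2 are cheap, and such
   a set is either bounded away from x (resp. y) or contains it. *)
Lemma chain_cost_bounded_below x y : apart x y ->
  exists2 eta, 0 < eta & forall hs, chain_wf hs -> eta <= chain_cost x hs y.
Proof.
move=> [nxy nC]; have al0 : 0 <= al := ltW (andP al01).1.
have dxy : 0 < d x y by rewrite lt_def metric_ge0 // andbT; apply/eqP => /(metric_eq0 hd).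
pose r := d x y / 2; have r0 : 0 < r by rewrite divr_gt0.
have [thx thx0 hthx] := large_sets_away x r0.
have [thy thy0 hthy] := large_sets_away y r0.
pose mu := Num.min (Num.min thx thy) (r / 2).
have mu0 : 0 < mu by rewrite !lt_min thx0 thy0 divr_gt0.
exists (Num.min (d x y `^ al) ((mu / lam) `^ al)).
  by rewrite lt_min !powR_gt0 // divr_gt0 ?lam_gt0.
case=> [|h hs] wf; first by rewrite ge_min lexx.
have [C p q hs1 hs2 cC Cp Cq _ bC1 bC2 _ _ _ _ cut] :=
  @cut_at_largest x (h :: hs) y ltac:(by []) wf.
have H1 := chain_cost_ge_into x cC Cp bC1.
have H2 := chain_cost_ge_from y cC Cq bC2.
have cost1 := chain_cost_ge0 x hs1 p; have cost2 := chain_cost_ge0 q hs2 y.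
have mu_le z : mu <= z -> (mu / lam) `^ al <= (z / lam) `^ al.
  move=> hz; apply: ge0_ler_powRl; rewrite ?divr_ge0 ?(ltW mu0) ?(ltW lam_gt0) //.
  by rewrite ler_pM2r ?invr_gt0 ?lam_gt0.
rewrite ge_min; apply/orP; right.
case: (leP mu (d x p)) => [hp|hp].
  by apply: le_trans (mu_le _ hp) (le_trans H1 _); apply: le_trans cut; lra.
case: (leP mu (d q y)) => [hq|hq].
  by apply: le_trans (mu_le _ hq) (le_trans H2 _); apply: le_trans cut; lra.
exfalso.
have mur : mu <= r / 2 by rewrite ge_min lexx orbT.
have rC : r <= diam d C.
  have e2r : d x y = 2 * r by rewrite /r; field.
  by have := dist_through hd x y hbd Cp Cq; lra.
have [Cx|nCx] := pselect (C x); last first.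
  have : mu <= thx by rewrite !ge_min lexx.
  by have := hthx C p cC rC nCx Cp; lra.
have [Cy|nCy] := pselect (C y); last first.
  have : mu <= thy by rewrite !ge_min lexx orbT.
  by have := hthy C q cC rC nCy Cq; rewrite (metric_sym hd y q); lra.
by apply: nC; exists C.
Qed.

Definition chain_dist x y : R :=
  inf [set c | exists2 hs, chain_wf hs & c = chain_cost x hs y].

Lemma chain_costs_nonempty x y :
  [set c | exists2 hs, chain_wf hs & c = chain_cost x hs y] !=set0.
Proof. by exists (chain_cost x [::] y), [::]. Qed.

Lemma chain_dist_le x hs y : chain_wf hs -> chain_dist x y <= chain_cost x hs y.
Proof.
move=> wf; apply: ge_inf; last by exists hs.
by exists 0 => _ [gs _ ->]; exact: chain_cost_ge0.
Qed.

Lemma chain_dist_ge x y c : (forall hs, chain_wf hs -> c <= chain_cost x hs y) ->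
  c <= chain_dist x y.
Proof. by move=> h; apply: lb_le_inf (chain_costs_nonempty x y) _ => _ [hs /h + ->]. Qed.

Lemma chain_dist_ge0 x y : 0 <= chain_dist x y.
Proof. by apply: chain_dist_ge => hs _; exact: chain_cost_ge0. Qed.

Lemma chain_dist_le_pow x y : chain_dist x y <= d x y `^ al.
Proof. exact: (@chain_dist_le x [::]). Qed.

Lemma chain_dist_xx x : chain_dist x x = 0.
Proof.
apply/le_anti; rewrite chain_dist_ge0 andbT.
by have := chain_dist_le_pow x x; rewrite (metric_xx hd) powR0 // gt_eqF // (andP al01).1.
Qed.

Lemma chain_dist_triangle_pow a x y : chain_dist a y <= chain_dist a x + d x y `^ al.
Proof.
rewrite -lerBlDr; apply: chain_dist_ge => hs wf; rewrite lerBlDr.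
apply: le_trans (chain_dist_le a y wf) _.
elim: hs a {wf} => [|h hs IH] a /=; last by rewrite -addrA lerD2l.
apply: le_trans (powRD_le al01 (metric_ge0 hd _ _) (metric_ge0 hd _ _)).
apply: ge0_ler_powRl; first exact: ltW (andP al01).1.
  exact: metric_ge0.
exact: metric_triangle.
Qed.

Lemma chain_dist_le_set C a x y : Cc C -> C x -> C y -> chain_dist a y <= chain_dist a x.
Proof.
move=> cC Cx Cy; apply: chain_dist_ge => hs wf.
have wf' : chain_wf (hs ++ [:: (C, x, y)]) by move=> h /In_cat [/wf|[<-|[]]].
apply: le_trans (chain_dist_le a y wf') _.
by rewrite chain_cost_cat /= (metric_xx hd) powR0 ?gt_eqF ?(andP al01).1 // addr0.
Qed.

Lemma chain_dist_const C a x y : Cc C -> C x -> C y -> chain_dist a x = chain_dist a y.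
Proof.
move=> cC Cx Cy; apply/le_anti.
by rewrite (chain_dist_le_set a cC Cx Cy) (chain_dist_le_set a cC Cy Cx).
Qed.

Lemma chain_dist_gt0 x y : apart x y -> 0 < chain_dist x y.
Proof.
move=> xy; have [eta eta0 h] := chain_cost_bounded_below xy.
exact: lt_le_trans eta0 (chain_dist_ge h).
Qed.

Lemma apart_sym x y : apart x y -> apart y x.
Proof. by case=> nxy nC; split => [/esym //|[C [cC Cy Cx]]]; apply: nC; exists C. Qed.

Lemma separating_function (P : nat -> Z) : exists u : Z -> R, [/\ holder d al u,
  forall C, Cc C -> exists c, forall z, C z -> u z = c &
  forall k l, apart (P k) (P l) -> u (P k) <> u (P l)].
Proof.
have [M hM] := hbd; pose B := M `^ al + 1; pose F n := chain_dist (P n).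
have B_gt0 : 0 < B by rewrite ltr_wpDl ?powR_ge0.
have F_le n z : F n z <= B.
  apply: le_trans (chain_dist_le_pow _ _) _; rewrite ler_wpDr //.
  by apply: ge0_ler_powRl; rewrite ?(metric_ge0 hd) ?(ltW (andP al01).1).
have F_ge0 n z : 0 <= F n z := chain_dist_ge0 _ _.
pose u := series F B P; exists u; split.
- exists (2 * B)^-1 => x y; rewrite ler_norml.
  have hxy n : F n x <= F n y + d x y `^ al.
    by rewrite (metric_sym hd x y); exact: chain_dist_triangle_pow.
  have hyx n : F n y <= F n x + d x y `^ al by exact: chain_dist_triangle_pow.
  have := series_holder P B_gt0 F_ge0 F_le (powR_ge0 _ _) hxy.
  have := series_holder P B_gt0 F_ge0 F_le (powR_ge0 _ _) hyx.
  by rewrite /u; move=> *; apply/andP; split; lra.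
- move=> C cC; have [c0 Cc0] := diam_gt0_nonempty (Cc_diam cC).
  by exists (u c0) => z Cz; apply: series_eq => n; exact: chain_dist_const cC Cz Cc0.
have sepF k l : (k < l)%N -> apart (P k) (P l) -> u (P k) <> u (P l).
  move=> kl /apart_sym lk; apply/eqP; apply: (series_sep B_gt0 F_ge0 F_le kl).
  by rewrite /F chain_dist_xx gt_eqF // chain_dist_gt0.
move=> k l hkl; case: (ltngtP k l) => [kl|lk|ekl]; first exact: sepF.
  by move=> /esym; apply: sepF lk (apart_sym hkl).
by case: hkl; rewrite ekl.
Qed.

Lemma images_injective (u : Z -> R) (X : set Z) :
  (forall C, Cc C -> exists2 x, X x & C x) ->
  (forall C, Cc C -> exists c, forall z, C z -> u z = c) ->
  (forall x y, X x -> X y -> apart x y -> u x <> u y) ->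
  forall C1 C2, Cc C1 -> Cc C2 -> u @` C1 = u @` C2 -> C1 = C2.
Proof.
move=> meet const sepX C1 C2 c1 c2 img; apply: contrapT => ne.
have [x1 Xx1 C1x1] := meet C1 c1; have [x2 Xx2 C2x2] := meet C2 c2.
have [y C2y uy] : (u @` C2) (u x1) by rewrite -img; exists x1.
have [c hc] := const C2 c2.
apply: (sepX x1 x2 Xx1 Xx2); last by rewrite -uy !hc.
split=> [e|[C [cC Cx1 Cx2]]]; apply: ne.
  by apply: (sep_disjoint c1 c2 C1x1); rewrite e.
by rewrite -(sep_disjoint cC c1 Cx1 C1x1) (sep_disjoint cC c2 Cx2 C2x2).
Qed.

End SeparatedFamily.

Lemma countable_transversal (Z : Type) (Cc : set (set Z)) (z0 : Z) : countable Cc ->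
  (forall C, Cc C -> C !=set0) -> exists P : nat -> Z, forall C, Cc C -> exists n, C (P n).
Proof.
move=> /countable_injP [f finj] ne.
have hz n : exists z, forall C, Cc C -> f C = n -> C z.
  have [[C cC fC]|none] := pselect (exists2 C, Cc C & f C = n); last first.
    by exists z0 => C cC fC; exfalso; apply: none; exists C.
  have [z Cz] := ne C cC; exists z => C' cC' fC'.
  suff -> : C' = C by [].
  by apply: finj; [exact: mem_set|exact: mem_set|rewrite fC fC'].
have [P hP] := choice hz; exists P => C cC; exists (f C); exact: hP.
Qed.

Theorem theorem4p1 (R : realType) (alpha : R) :
  0 < alpha < 1 ->
  exists D : R, 1 <= D /\
    forall (Z : Type) (d : Z -> Z -> R),
      is_metric d -> bounded_metric d ->
      forall Cc : set (set Z),
        countable Cc ->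
        (forall C, Cc C -> mclosed d C /\ 0 < diam d C) ->
        (forall C1 C2, Cc C1 -> Cc C2 -> C1 <> C2 -> D <= reldist d C1 C2) ->
        forall z1 z2 : Z, z1 <> z2 ->
          (exists C, Cc C /\ C z1 /\ C z2) \/
          (exists u : Z -> R,
             holder d alpha u /\
             (forall C, Cc C -> exists c : R, forall z, C z -> u z = c) /\
             (forall C1 C2, Cc C1 -> Cc C2 -> u @` C1 = u @` C2 -> C1 = C2) /\
             u z1 <> u z2).
Proof.
move=> al01; have /andP[al0 al1] := al01.
have D_gt0 : 0 < (1 - alpha)^-1 by rewrite invr_gt0 subr_gt0.
exists (1 - alpha)^-1; split; first by rewrite invf_ge1 ?subr_gt0 // gerBl ltW.
move=> Z d hd hbd Cc Cc_count hC Cc_sep z1 z2 z12.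
have [[C [cC [Cz1 Cz2]]]|nC] := pselect (exists C, Cc C /\ C z1 /\ C z2).
  by left; exists C.
right.
have alD : alpha * (1 + (1 - alpha)^-1^-1) <= 1 by rewrite invrK; nra.
have Cc_closed C : Cc C -> mclosed d C by move/hC => [].
have Cc_diam C : Cc C -> 0 < diam d C by move/hC => [].
have [P hP] := countable_transversal z1 Cc_count
  (fun C cC => diam_gt0_nonempty (Cc_diam C cC)).
pose Q n := if n is m.+2 then P m else if n is 1 then z2 else z1.
have [u [u_holder u_const u_sep]] :=
  separating_function al01 D_gt0 alD hd hbd Cc_closed Cc_diam Cc_sep Q.
exists u; split => //; split => //; split.
  apply: (images_injective D_gt0 hd Cc_diam Cc_sep (X := range Q)) => //.
    move=> C cC; have [n Cn] := hP C cC; exists (Q n.+2) => //; exists n.+2.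
  by move=> _ _ [k _ <-] [l _ <-]; exact: u_sep.
by apply: (u_sep 0%N 1%N); split => // [[C [cC Cz1 Cz2]]]; apply: nC; exists C.
Qed.
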